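(* Let $A$ be a bounded linear operator on a complex Hilbert space $\mathcal{H}$, and let $W(A) = \{\langle Ax, x\rangle : x \in \mathcal{H}, \|x\| = 1\}$ be its numerical range. Then \[ \|A^*A - AA^*\| \le 2\, S(W(A)), \] where $S(W(A))$ denotes the area (planar Lebesgue measure) of $W(A) \subset \mathbb{C}$. *)

From HB Require Import structures.
From mathcomp Require Import all_boot all_order all_algebra.
From mathcomp Require Import all_classical all_reals all_analysis.
From mathcomp Require Import complex.
Set Implicit Arguments. Unset Strict Implicit. Unset Printing Implicit Defensive.
Import Order.TTheory GRing.Theory Num.Theory.
Local Open Scope ring_scope.
Local Open Scope classical_set_scope.
Local Open Scope complex_scope.

Section Hilbert.
Variables (R : realType) (V : lmodType R[i]) (ip : V -> V -> R[i]).

Definition hnorm (x : V) : R := Num.sqrt (complex.Re (ip x x)).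

Definition is_inner_product : Prop :=
  [/\ (forall (a : R[i]) (x1 x2 y : V), ip (a *: x1 + x2) y = a * ip x1 y + ip x2 y),
      (forall x y : V, ip y x = (ip x y)^*),
      (forall x : V, 0 <= ip x x) &
      (forall x : V, ip x x = 0 -> x = 0)].

Definition is_complete_hnorm : Prop :=
  forall u : nat -> V,
    (forall e : R, 0 < e -> exists N : nat, forall m n : nat,
        (N <= m)%N -> (N <= n)%N -> hnorm (u m - u n) < e) ->
    exists l : V, forall e : R, 0 < e -> exists N : nat, forall n : nat,
        (N <= n)%N -> hnorm (u n - l) < e.

Definition is_hilbert_space : Prop := is_inner_product /\ is_complete_hnorm.

Definition is_bounded_linear (A : V -> V) : Prop :=
  (forall (a : R[i]) (x y : V), A (a *: x + y) = a *: A x + A y) /\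
  exists M : R, forall x : V, hnorm (A x) <= M * hnorm x.

Definition is_adjoint (A Astar : V -> V) : Prop :=
  forall x y : V, ip (A x) y = ip x (Astar y).

Definition numerical_range (A : V -> V) : set R[i] :=
  [set ip (A x) x | x in [set x : V | hnorm x = 1]].

Definition op_norm (T : V -> V) : \bar R :=
  ereal_sup [set (hnorm (T x))%:E | x in [set x : V | hnorm x <= 1]].

End Hilbert.

Definition area (R : realType) (S : set R[i]) : \bar R :=
  mu_ext ((@lebesgue_measure R) \x (@lebesgue_measure R))%E
    [set (complex.Re z, complex.Im z) | z in S].

From HB Require Import structures.
From mathcomp Require Import all_boot all_order all_algebra.
From mathcomp Require Import all_classical all_reals all_analysis.
From mathcomp Require Import complex.
From mathcomp Require Import measurable_realfun ring lra.

(* For orthonormal x, e, the numbers <Az, z> with z a unit vector of span {x, e} fill an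
   ellipse, the affine image of the Bloch sphere, so W(A) contains it. The ellipse contains
   a parallelogram of area | |<Ae, x>|^2 - |<Ax, e>|^2 | / 2, which bounds this quantity by
   2 S(W(A)). For a unit vector x, choosing e along the component of Ax (or of A*x) that is
   orthogonal to x turns the bound into | ||Ax||^2 - ||A*x||^2 | <= 2 S(W(A)), that is
   |<Tx, x>| <= 2 S(W(A)) for the self-adjoint T = A*A - AA*; and the norm of a
   self-adjoint operator is bounded by that of its quadratic form. *)

Set Implicit Arguments. Unset Strict Implicit. Unset Printing Implicit Defensive.
Import Order.TTheory GRing.Theory Num.Theory.
Local Open Scope ring_scope.
Local Open Scope classical_set_scope.

Section PlanarArea.
Variable R : realType.

Local Notation mu2 := ((@lebesgue_measure R) \x (@lebesgue_measure R))%E.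

Lemma area_ge0 (S : set R[i]) : (0 <= area S)%E.
Proof. by apply: mu_ext_ge0 => // X; exact: measure_ge0. Qed.

Definition sheared_box (x0 y0 s h k : R) : set (R * R) :=
  [set p | `|p.1 - x0| <= h /\ `|p.2 - y0 - s * (p.1 - x0)| <= k].

Lemma sheared_box_xsection (x0 y0 s h k x : R) : `|x - x0| <= h ->
  xsection (sheared_box x0 y0 s h k) x =
  `[y0 + s * (x - x0) - k, y0 + s * (x - x0) + k]%classic.
Proof.
move=> hx; apply/seteqP; split => y; rewrite /xsection /sheared_box /= in_itv /=.
  by rewrite inE /= => -[_]; rewrite ler_norml => /andP[? ?]; apply/andP; split; lra.
by move=> /andP[? ?]; rewrite inE /=; split => //; rewrite ler_norml; apply/andP; split; lra.
Qed.

Lemma measurable_sheared_box (x0 y0 s h k : R) :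
  measurable (sheared_box x0 y0 s h k : set (measurableTypeR R * measurableTypeR R)).
Proof.
have -> : sheared_box x0 y0 s h k =
    ((fun p => p.1 - x0) @^-1` `[- h, h]%classic) `&`
    ((fun p => p.2 - y0 - s * (p.1 - x0)) @^-1` `[- k, k]%classic).
  by apply/seteqP; split => p; rewrite /sheared_box /= !in_itv /= !ler_norml.
have m1 : measurable_fun setT (fun p : measurableTypeR R * measurableTypeR R => p.1 - x0).
  by apply: measurable_funB => //; exact: measurable_fst.
have m2 : measurable_fun setT
    (fun p : measurableTypeR R * measurableTypeR R => p.2 - y0 - s * (p.1 - x0)).
  apply: measurable_funB; first by apply: measurable_funB => //; exact: measurable_snd.
  by apply: measurable_funM => //; apply: measurable_funB => //; exact: measurable_fst.
by apply: measurableI; rewrite -[X in measurable X]setTI; [apply: m1 | apply: m2].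
Qed.

Lemma sheared_box_measure (x0 y0 s h k : R) : 0 <= h -> 0 <= k ->
  mu2 (sheared_box x0 y0 s h k) = ((h *+ 2) * (k *+ 2))%:E.
Proof.
move=> h0 k0; rewrite /product_measure1 /=.
transitivity (\int[lebesgue_measure]_x
    ((\1_(`[x0 - h, x0 + h]%classic) x)%:E * (k *+ 2)%:E))%E.
  apply: eq_integral => x _; rewrite indicE.
  case: (boolP (x \in _)) => xin.
    rewrite mul1e sheared_box_xsection; last first.
      by move: xin; rewrite inE /= in_itv /= ler_distl => /andP[? ?]; apply/andP; split; lra.
    rewrite lebesgue_measure_itv /= lte_fin.
    case: ifPn => [_|]; first by rewrite -EFinD; congr EFin; lra.
    rewrite -leNgt => ?; have -> : k = 0 by lra.
    by rewrite mul0rn.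
  rewrite mul0e; have -> : xsection (sheared_box x0 y0 s h k) x = set0.
    apply/seteqP; split => y //; rewrite /xsection /sheared_box /= => /set_mem [hx _].
    by move/negP: xin; apply; rewrite inE /= in_itv /= -ler_distl.
  by rewrite measure0.
rewrite ge0_integralZr //; last by rewrite lee_fin; lra.
- rewrite integral_indic //= setIT lebesgue_measure_itv /= lte_fin.
  case: ifPn => [_|]; first by rewrite -EFinD -EFinM; congr EFin; lra.
  rewrite -leNgt => ?; have -> : h = 0 by lra.
  by rewrite mul0rn mul0r mul0e.
- by apply/measurable_EFinP; exact: measurable_indic.
Qed.

Lemma sheared_box_le_mu_ext (S : set (R * R)) (x0 y0 s h k : R) :
  0 <= h -> 0 <= k -> sheared_box x0 y0 s h k `<=` S ->
  (((h *+ 2) * (k *+ 2))%:E <= mu_ext mu2 S)%E.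
Proof.
move=> h0 k0 PS; rewrite -(@sheared_box_measure x0 y0 s h k h0 k0).
by rewrite -(measurable_mu_extE _ (measurable_sheared_box x0 y0 s h k)); exact: le_mu_ext.
Qed.

Lemma line_meets_unit_sphere (n1 n2 n3 k1 k2 k3 : R) :
  n1 ^+ 2 + n2 ^+ 2 + n3 ^+ 2 <= 1 -> 0 < k1 ^+ 2 + k2 ^+ 2 + k3 ^+ 2 ->
  exists t, (n1 + t * k1) ^+ 2 + (n2 + t * k2) ^+ 2 + (n3 + t * k3) ^+ 2 = 1.
Proof.
set a := k1 ^+ 2 + k2 ^+ 2 + k3 ^+ 2; set b := n1 * k1 + n2 * k2 + n3 * k3.
set c := n1 ^+ 2 + n2 ^+ 2 + n3 ^+ 2 - 1 => n_le1 a_gt0.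
have disc_ge0 : 0 <= b ^+ 2 - a * c.
  have : 0 <= a * - c by apply: mulr_ge0; rewrite /c; lra.
  by have := sqr_ge0 b; rewrite mulrN; lra.
exists ((- b + Num.sqrt (b ^+ 2 - a * c)) / a).
have := sqr_sqrtr disc_ge0; set q := Num.sqrt _ => qq.
apply: (@mulfI _ a); first by rewrite gt_eqF.
transitivity (q ^+ 2 - (b ^+ 2 - a * c) + a); last by rewrite qq subrr add0r mulr1.
by rewrite /a /b /c; field; rewrite -/a gt_eqF.
Qed.

Section AffineImage.
Variables (S : set (R * R)) (x0 y0 m11 m12 m21 m22 : R).

Local Notation det := (m11 * m22 - m12 * m21).

Lemma sphere_image_sub_disk_image (g1 g2 : R) : det != 0 ->
  (forall n1 n2 n3 : R, n1 ^+ 2 + n2 ^+ 2 + n3 ^+ 2 = 1 ->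
     S (x0 + m11 * n1 + m12 * n2 + g1 * n3, y0 + m21 * n1 + m22 * n2 + g2 * n3)) ->
  forall n1 n2 : R, n1 ^+ 2 + n2 ^+ 2 <= 1 ->
     S (x0 + m11 * n1 + m12 * n2, y0 + m21 * n1 + m22 * n2).
Proof.
move=> det_neq0 sphereS n1 n2 n_le1.
(* (k1, k2, det) spans the kernel of the 2 x 3 matrix, so moving along it lifts the disk
   point to the sphere without changing its image. *)
set k1 := m12 * g2 - g1 * m22; set k2 := g1 * m21 - m11 * g2.
have n_le1' : n1 ^+ 2 + n2 ^+ 2 + 0 ^+ 2 <= 1 by rewrite expr0n addr0.
have k_gt0 : 0 < k1 ^+ 2 + k2 ^+ 2 + det ^+ 2.
  have : 0 < det ^+ 2 by rewrite lt_neqAle sqr_ge0 andbT eq_sym sqrf_eq0.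
  by have := sqr_ge0 k1; have := sqr_ge0 k2; lra.
have [t n_on_sphere] := line_meets_unit_sphere n_le1' k_gt0.
have := sphereS _ _ _ n_on_sphere; congr S; congr pair; rewrite /k1 /k2; ring.
Qed.

Local Notation r := (Num.sqrt (m11 ^+ 2 + m12 ^+ 2)).
Local Notation c := (Num.sqrt (2^-1 : R)).
Local Notation slope := ((m11 * m21 + m12 * m22) / (m11 ^+ 2 + m12 ^+ 2)).

Lemma first_row_sqnorm_gt0 : det != 0 -> 0 < m11 ^+ 2 + m12 ^+ 2.
Proof.
move=> det_neq0; rewrite lt_neqAle addr_ge0 ?sqr_ge0 // andbT eq_sym paddr_eq0 ?sqr_ge0 //.
by apply: contra det_neq0; rewrite !sqrf_eq0 => /andP[/eqP -> /eqP ->]; rewrite !mul0r subrr.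
Qed.

(* The sheared box is the image of the square [|t|, |s| <= c] inscribed in the unit disk,
   written in the orthonormal frame of the first row (m11, m12) and its normal. *)
Lemma sheared_box_sub_disk_image : det != 0 ->
  (forall n1 n2 : R, n1 ^+ 2 + n2 ^+ 2 <= 1 ->
     S (x0 + m11 * n1 + m12 * n2, y0 + m21 * n1 + m22 * n2)) ->
  sheared_box x0 y0 slope (r * c) (`|det| * c / r) `<=` S.
Proof.
move=> det_neq0 diskS [X Y]; rewrite /sheared_box /= => -[hX hY].
have r2_gt0 := first_row_sqnorm_gt0 det_neq0; set r2 := _ + _ in r2_gt0 *.
have r_gt0 : 0 < r by rewrite sqrtr_gt0.
have rr : r ^+ 2 = r2 by rewrite sqr_sqrtr // ltW.
have c_gt0 : 0 < c by rewrite sqrtr_gt0 invr_gt0.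
have sqr_le_half (u : R) : `|u| <= c -> u ^+ 2 <= 2^-1.
  move=> uc; rewrite -[2^-1]sqr_sqrtr ?invr_ge0 //.
  by rewrite -real_normK ?num_real // ler_sqr ?nnegrE ?normr_ge0 ?(ltW c_gt0).
pose t := (X - x0) / r; pose s := (Y - y0 - slope * (X - x0)) * r / det.
have t_le : `|t| <= c.
  by rewrite normrM normfV (gtr0_norm r_gt0) ler_pdivrMr // mulrC.
have s_le : `|s| <= c.
  rewrite normrM normfV normrM (gtr0_norm r_gt0) ler_pdivrMr ?normr_gt0 //.
  by rewrite -ler_pdivlMr // [c * _]mulrC.
pose n1 := (t * m11 - s * m12) / r; pose n2 := (t * m12 + s * m11) / r.
have e1 : m11 * n1 + m12 * n2 = X - x0.
  transitivity (t * (r ^+ 2 / r)); first by rewrite rr /r2 /n1 /n2; field; rewrite gt_eqF.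
  by rewrite /t; field; rewrite gt_eqF.
have e2 : m21 * n1 + m22 * n2 = Y - y0.
  transitivity (t * slope * (r ^+ 2 / r) + s * det / r).
    by rewrite rr -/r2 /n1 /n2; field; rewrite !gt_eqF.
  by rewrite /t /s -/r2; field; rewrite det_neq0 !gt_eqF.
have -> : (X, Y) = (x0 + m11 * n1 + m12 * n2, y0 + m21 * n1 + m22 * n2).
  by rewrite -!addrA e1 e2 !subrKC.
apply: diskS.
have -> : n1 ^+ 2 + n2 ^+ 2 = (t ^+ 2 + s ^+ 2) * (r2 / r ^+ 2).
  by rewrite /n1 /n2 /r2; field; rewrite gt_eqF.
by rewrite rr divff ?gt_eqF // mulr1; have := sqr_le_half _ t_le; have := sqr_le_half _ s_le; lra.
Qed.

Lemma disk_image_area : det != 0 ->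
  (forall n1 n2 : R, n1 ^+ 2 + n2 ^+ 2 <= 1 ->
     S (x0 + m11 * n1 + m12 * n2, y0 + m21 * n1 + m22 * n2)) ->
  ((`|det| *+ 2)%:E <= mu_ext mu2 S)%E.
Proof.
move=> det_neq0 diskS.
have r_gt0 : 0 < r by rewrite sqrtr_gt0 first_row_sqnorm_gt0.
have c_gt0 : 0 < c by rewrite sqrtr_gt0 invr_gt0.
have -> : `|det| *+ 2 = (r * c) *+ 2 * ((`|det| * c / r) *+ 2).
  rewrite !mulr2n; transitivity (`|det| * c ^+ 2 * 4).
    by rewrite sqr_sqrtr ?invr_ge0 //; field.
  by field; rewrite gt_eqF.
apply: sheared_box_le_mu_ext (sheared_box_sub_disk_image det_neq0 diskS).
- by rewrite mulr_ge0 // ltW.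
- by rewrite !mulr_ge0 ?invr_ge0 // ltW.
Qed.

Lemma sphere_image_area (g1 g2 : R) :
  (forall n1 n2 n3 : R, n1 ^+ 2 + n2 ^+ 2 + n3 ^+ 2 = 1 ->
     S (x0 + m11 * n1 + m12 * n2 + g1 * n3, y0 + m21 * n1 + m22 * n2 + g2 * n3)) ->
  ((`|det| *+ 2)%:E <= mu_ext mu2 S)%E.
Proof.
move=> sphereS; have [det0 | det_neq0] := eqVneq det 0.
  by rewrite det0 normr0 mul0rn; apply: mu_ext_ge0 => // X; exact: measure_ge0.
exact: disk_image_area det_neq0 (sphere_image_sub_disk_image det_neq0 sphereS).
Qed.

End AffineImage.

End PlanarArea.

Local Open Scope complex_scope.

Section Complex.
Variable R : realType.

Definition normc2 (c : R[i]) : R := complex.Re c ^+ 2 + complex.Im c ^+ 2.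

Lemma normc2J (c : R[i]) : normc2 c^* = normc2 c.
Proof. by case: c => a b; rewrite /normc2 /= sqrrN. Qed.

Lemma bloch_coordinates (n1 n2 n3 : R) : n1 ^+ 2 + n2 ^+ 2 + n3 ^+ 2 = 1 ->
  exists al be : R[i], [/\ al * al^* = ((1 + n3) / 2)%:C,
    be * be^* = ((1 - n3) / 2)%:C & al^* * be = (n1 / 2) +i* (n2 / 2)].
Proof.
move=> n_unit; have [n3N1 | n3_neqN1] := eqVneq n3 (-1).
  have [-> ->] : n1 = 0 /\ n2 = 0 by rewrite n3N1 in n_unit; split; nra.
  exists (0 +i* 0), (1 +i* 0); rewrite n3N1; simpc.
  by split; apply/eqP; rewrite eq_complex /= ?eqxx ?andbT //; apply/eqP; field.
have n3_gtN1 : -1 < n3 by rewrite lt_neqAle eq_sym n3_neqN1 /=; nra.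
have c_gt0 : 0 < (1 + n3) / 2 by lra.
pose al : R := Num.sqrt ((1 + n3) / 2).
have al_gt0 : 0 < al by rewrite sqrtr_gt0.
have alal : al ^+ 2 = (1 + n3) / 2 by rewrite sqr_sqrtr // ltW.
exists (al +i* 0), ((n1 / (2 * al)) +i* (n2 / (2 * al))); simpc.
split; apply/eqP; rewrite eq_complex /= ?eqxx ?andbT; apply/eqP.
- by rewrite -expr2.
- apply/eqP/andP; split; apply/eqP; last by rewrite mulrC addNr.
  transitivity ((n1 ^+ 2 + n2 ^+ 2) / (4 * al ^+ 2)); first by field; rewrite gt_eqF.
  have -> : n1 ^+ 2 + n2 ^+ 2 = (1 - n3) * (1 + n3) by lra.
  by rewrite alal; field; rewrite gt_eqF //; lra.
- by apply/eqP/andP; split; apply/eqP; field; rewrite gt_eqF.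
Qed.
End Complex.

Section InnerProduct.
Variables (R : realType) (V : lmodType R[i]) (ip : V -> V -> R[i]).
Hypothesis ip_linear : forall (a : R[i]) (x1 x2 y : V),
  ip (a *: x1 + x2) y = a * ip x1 y + ip x2 y.
Hypothesis ipC : forall x y : V, ip y x = (ip x y)^*.
Hypothesis ip_ge0 : forall x : V, 0 <= ip x x.
Hypothesis ip_eq0 : forall x : V, ip x x = 0 -> x = 0.

Lemma ip0l y : ip 0 y = 0.
Proof.
have := ip_linear 1 0 0 y; rewrite scale1r addr0 mul1r => /esym.
by rewrite -[X in _ = X]addr0 => /addrI.
Qed.

Lemma ipDl x y z : ip (x + y) z = ip x z + ip y z.
Proof. by rewrite -[x]scale1r ip_linear mul1r scale1r. Qed.

Lemma ipZl a x y : ip (a *: x) y = a * ip x y.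
Proof. by rewrite -[a *: x]addr0 ip_linear ip0l addr0. Qed.

Lemma ipNl x y : ip (- x) y = - ip x y.
Proof. by rewrite -scaleN1r ipZl mulN1r. Qed.

Lemma ipBl x y z : ip (x - y) z = ip x z - ip y z.
Proof. by rewrite ipDl ipNl. Qed.

Lemma ipDr x y z : ip x (y + z) = ip x y + ip x z.
Proof. by rewrite ipC ipDl rmorphD (ipC y x) (ipC z x). Qed.

Lemma ipZr a x y : ip x (a *: y) = a^* * ip x y.
Proof. by rewrite ipC ipZl rmorphM (ipC y x). Qed.

Lemma ipNr x y : ip x (- y) = - ip x y.
Proof. by rewrite ipC ipNl rmorphN (ipC y x). Qed.

Lemma ipBr x y z : ip x (y - z) = ip x y - ip x z.
Proof. by rewrite ipDr ipNr. Qed.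

Definition sqnorm (x : V) : R := complex.Re (ip x x).

Lemma ip_self x : ip x x = (sqnorm x)%:C.
Proof. by move: (ip_ge0 x); rewrite lecE /sqnorm; case: (ip x x) => a b /= /andP[/eqP -> _]. Qed.

Lemma sqnorm_ge0 x : 0 <= sqnorm x.
Proof. by move: (ip_ge0 x); rewrite lecE => /andP[]. Qed.

Lemma sqnorm_eq0 x : sqnorm x = 0 -> x = 0.
Proof. by move=> x0; apply: ip_eq0; rewrite ip_self x0. Qed.

Lemma sqnormZ a x : sqnorm (a *: x) = normc2 a * sqnorm x.
Proof.
by rewrite /sqnorm ipZl ipZr ip_self; case: a => a b; rewrite /normc2 /=; simpc; rewrite /=; ring.
Qed.

Lemma sqnormD_orth x y : ip x y = 0 -> sqnorm (x + y) = sqnorm x + sqnorm y.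
Proof.
move=> xy; have yx : ip y x = 0 by rewrite ipC xy conjc0.
by rewrite /sqnorm ipDl !ipDr xy yx addr0 add0r raddfD.
Qed.

Lemma sqnorm_parallelogram x y :
  sqnorm (x + y) + sqnorm (x - y) = 2 * sqnorm x + 2 * sqnorm y.
Proof.
rewrite /sqnorm -raddfD /= ipDl ipBl !ipBr !ipDr.
have -> : ip x x + ip x y + (ip y x + ip y y) + (ip x x - ip x y - (ip y x - ip y y))
  = (ip x x + ip y y) *+ 2 by rewrite mulr2n; ring.
by rewrite raddfMn raddfD /= mulr2n; ring.
Qed.

Lemma unit_direction w : 0 < sqnorm w ->
  exists2 e, ip e e = 1 & w = (Num.sqrt (sqnorm w))%:C *: e.
Proof.
move=> w_gt0; pose N := Num.sqrt (sqnorm w); have N_gt0 : 0 < N by rewrite sqrtr_gt0.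
exists (N^-1%:C *: w); last by rewrite scalerA -rmorphM divff ?gt_eqF // scale1r.
rewrite ipZl ipZr ip_self -(sqr_sqrtr (ltW w_gt0)) -/N -!complexr0; simpc.
by apply/eqP; rewrite eq_complex /= eqxx andbT; apply/eqP; field; rewrite gt_eqF.
Qed.

Lemma bessel v e : ip e e = 1 -> normc2 (ip v e) <= sqnorm v.
Proof.
move=> e_unit; have := sqnorm_ge0 (v - ip v e *: e).
rewrite /sqnorm !ipBl !ipBr !ipZl !ipZr e_unit (ipC v e) /normc2.
by case: (ip v e) => a b; case: (ip v v) => c d /=; simpc; rewrite /= !expr2; lra.
Qed.

Lemma sqnorm_sub_le_orth (x u v : V) (K : R) : 0 <= K -> ip u x = 0 -> ip v x = 0 ->
  (forall e, ip e e = 1 -> ip e x = 0 -> `|normc2 (ip u e) - normc2 (ip v e)| <= K) ->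
  `|sqnorm u - sqnorm v| <= K.
Proof.
move=> K_ge0.
suff side u' v' : ip u' x = 0 ->
    (forall e, ip e e = 1 -> ip e x = 0 -> normc2 (ip u' e) - normc2 (ip v' e) <= K) ->
    sqnorm u' - sqnorm v' <= K.
  move=> ux vx uvK; rewrite ler_norml; apply/andP; split.
  - suff : sqnorm v - sqnorm u <= K by lra.
    apply: side vx _ => e e_unit ex.
    by have := uvK e e_unit ex; rewrite ler_norml => /andP[]; lra.
  - apply: side ux _ => e e_unit ex.
    by have := uvK e e_unit ex; rewrite ler_norml => /andP[]; lra.
(* With e = u' / |u'|, |<u', e>|^2 = |u'|^2 while Bessel bounds |<v', e>|^2 by |v'|^2. *)
move=> ux uvK; have [u_gt0 | u_le0] := ltP 0 (sqnorm u'); last first.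
  by have := sqnorm_ge0 v'; lra.
have [e e_unit u_def] := unit_direction u_gt0.
have N_gt0 : 0 < Num.sqrt (sqnorm u') by rewrite sqrtr_gt0.
have ex : ip e x = 0.
  by move: ux; rewrite u_def ipZl => /eqP; rewrite mulf_eq0 fmorph_eq0 gt_eqF //= => /eqP.
have := uvK e e_unit ex; apply: le_trans; rewrite lerB ?bessel //.
by rewrite [in ip _ e]u_def ipZl e_unit mulr1 /normc2 /= expr0n addr0 sqr_sqrtr ?sqnorm_ge0.
Qed.

Section SelfAdjoint.
Variable T : V -> V.
Hypothesis T_linear : forall (a : R[i]) (x y : V), T (a *: x + y) = a *: T x + T y.
HB.instance Definition _ := GRing.isLinear.Build R[i] V V *:%R T T_linear.
Hypothesis T_selfadjoint : forall x y : V, ip (T x) y = ip x (T y).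

Lemma Re_ip_polarization x y :
  complex.Re (ip (T (x + y)) (x + y)) - complex.Re (ip (T (x - y)) (x - y)) =
  4 * complex.Re (ip (T x) y).
Proof.
rewrite (linearD T) (linearB T) -raddfB /= ipBl ipDl !ipBr !ipDr.
have -> : ip (T x) x + ip (T x) y + (ip (T y) x + ip (T y) y) -
    (ip (T x) x - ip (T x) y - (ip (T y) x - ip (T y) y)) =
    (ip (T x) y + ip (T y) x) *+ 2 by rewrite mulr2n; ring.
rewrite (T_selfadjoint y x) (ipC (T x) y); case: (ip (T x) y) => a b.
by rewrite raddfMn /= mulr2n; ring.
Qed.

Lemma quadratic_le_sqnorm (K : R) :
  (forall z, ip z z = 1 -> `|complex.Re (ip (T z) z)| <= K) ->
  forall z, `|complex.Re (ip (T z) z)| <= K * sqnorm z.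
Proof.
move=> unitK z; have [z_gt0 | z_le0] := ltP 0 (sqnorm z); last first.
  have -> : z = 0 by apply: sqnorm_eq0; apply/le_anti; rewrite z_le0 sqnorm_ge0.
  by rewrite linear0 ip0l normr0 /sqnorm ip0l mulr0.
have [e e_unit ->] := unit_direction z_gt0.
rewrite linearZ /= ipZl ipZr sqnormZ /sqnorm e_unit /= -/(sqnorm z).
have := unitK e e_unit; case: (ip (T e) e) => a b /= aK.
rewrite oppr0 !mul0r !subr0 mulr1 /normc2 /= expr0n addr0 mulrA -expr2.
by rewrite sqr_sqrtr ?sqnorm_ge0 // normrM ger0_norm ?sqnorm_ge0 // mulrC ler_wpM2r ?sqnorm_ge0.
Qed.

Lemma selfadjoint_hnorm_le (K : R) : 0 <= K ->
  (forall z, `|complex.Re (ip (T z) z)| <= K * sqnorm z) ->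
  forall x, sqnorm x <= 1 -> hnorm ip (T x) <= K.
Proof.
move=> K_ge0 quadK x x_le1; rewrite /hnorm -/(sqnorm (T x)).
have [Tx_gt0 | Tx_le0] := ltP 0 (sqnorm (T x)); last first.
  by rewrite (_ : sqnorm _ = 0) ?sqrtr0 //; apply/le_anti; rewrite Tx_le0 sqnorm_ge0.
have [e e_unit Tx_def] := unit_direction Tx_gt0.
have Txe : complex.Re (ip (T x) e) = Num.sqrt (sqnorm (T x)).
  by rewrite [in ip (T x) _]Tx_def ipZl e_unit mulr1.
have := Re_ip_polarization x e; rewrite Txe.
have := quadK (x + e); have := quadK (x - e).
rewrite !ler_norml => /andP[lower_xBe _] /andP[_ upper_xDe].
have : K * sqnorm (x + e) + K * sqnorm (x - e) = 2 * (K * sqnorm x) + 2 * K.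
  by rewrite -mulrDr sqnorm_parallelogram /(sqnorm e) e_unit /=; ring.
have : K * sqnorm x <= K by rewrite ler_piMr.
lra.
Qed.

End SelfAdjoint.

Lemma ip_comb al be x e x' e' :
  ip (al *: x + be *: e) (al *: x' + be *: e') =
  al * al^* * ip x x' + al * be^* * ip x e' + be * al^* * ip e x' + be * be^* * ip e e'.
Proof. by rewrite !ipDl !ipZl !ipDr !ipZr; ring. Qed.

Section Operator.
Variables A Astar : V -> V.
Hypothesis A_linear : forall (a : R[i]) (x y : V), A (a *: x + y) = a *: A x + A y.
HB.instance Definition _ := GRing.isLinear.Build R[i] V V *:%R A A_linear.
Hypothesis A_adjoint : forall x y : V, ip (A x) y = ip x (Astar y).

Lemma adjoint_linear a x y : Astar (a *: x + y) = a *: Astar x + Astar y.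
Proof.
apply/eqP; rewrite -subr_eq0; apply/eqP/ip_eq0.
set w := Astar _ - _.
by rewrite {2}/w ipBr ipDr ipZr -!A_adjoint ipDr ipZr subrr.
Qed.

HB.instance Definition _ := GRing.isLinear.Build R[i] V V *:%R Astar adjoint_linear.

Lemma numerical_range_bloch x e : ip x x = 1 -> ip e e = 1 -> ip x e = 0 ->
  forall n1 n2 n3 : R, n1 ^+ 2 + n2 ^+ 2 + n3 ^+ 2 = 1 ->
  numerical_range ip A
    (((1 + n3) / 2)%:C * ip (A x) x + ((1 - n3) / 2)%:C * ip (A e) e
     + (n1 / 2 -i* (n2 / 2)) * ip (A x) e + (n1 / 2 +i* (n2 / 2)) * ip (A e) x).
Proof.
move=> x_unit e_unit xe n1 n2 n3 n_unit; have ex : ip e x = 0 by rewrite ipC xe conjc0.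
have [al [be [alal bebe albe]]] := bloch_coordinates n_unit.
have albe' : al * be^* = n1 / 2 -i* (n2 / 2) by rewrite -[al]conjcK -rmorphM albe.
exists (al *: x + be *: e).
  rewrite /= /hnorm ip_comb x_unit e_unit xe ex !mulr0 !addr0 !mulr1 alal bebe.
  rewrite -rmorphD /=; have -> : (1 + n3) / 2 + (1 - n3) / 2 = 1 :> R by field.
  by rewrite sqrtr1.
by rewrite linearD ![in LHS]linearZ /= ip_comb alal bebe albe' [be * _]mulrC albe; ring.
Qed.

Lemma offdiag_le_area x e : ip x x = 1 -> ip e e = 1 -> ip x e = 0 ->
  ((`|normc2 (ip (A e) x) - normc2 (ip (A x) e)|)%:E <=
    2%:E * area (numerical_range ip A))%E.
Proof.
move=> x_unit e_unit xe; have := numerical_range_bloch x_unit e_unit xe.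
move: (ip (A x) x) (ip (A e) e) (ip (A x) e) (ip (A e) x).
move=> [a1 a2] [d1 d2] [q1 q2] [p1 p2] W_bloch.
(* The real and imaginary parts of the points of [numerical_range_bloch], as an affine
   function of (n1, n2, n3); its determinant is (|p|^2 - |q|^2) / 4. *)
have area_ge := @sphere_image_area _
  [set (complex.Re z, complex.Im z) | z in numerical_range ip A]
  ((a1 + d1) / 2) ((a2 + d2) / 2) ((p1 + q1) / 2) ((q2 - p2) / 2) ((p2 + q2) / 2)
  ((p1 - q1) / 2) ((a1 - d1) / 2) ((a2 - d2) / 2).
have -> : `|normc2 (p1 +i* p2) - normc2 (q1 +i* q2)| =
    2 * (`|(p1 + q1) / 2 * ((p1 - q1) / 2) - (q2 - p2) / 2 * ((p2 + q2) / 2)| *+ 2).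
  have -> : (p1 + q1) / 2 * ((p1 - q1) / 2) - (q2 - p2) / 2 * ((p2 + q2) / 2) =
      (normc2 (p1 +i* p2) - normc2 (q1 +i* q2)) / 4 by rewrite /normc2 /=; field.
  by rewrite normrM [`|4^-1|]ger0_norm ?invr_ge0 // mulr2n; field.
rewrite EFinM; apply: lee_wpmul2l => //; apply: area_ge => n1 n2 n3 n_unit.
eexists; first exact: W_bloch n_unit.
by congr pair; rewrite /=; simpc; rewrite /=; field.
Qed.

Lemma adjoint_ipl x y : ip (Astar x) y = ip x (A y).
Proof. by rewrite ipC -A_adjoint -ipC. Qed.

Lemma commutator_form_le_area (r : R) : area (numerical_range ip A) = r%:E ->
  forall x, ip x x = 1 -> `|sqnorm (A x) - sqnorm (Astar x)| <= 2 * r.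
Proof.
move=> area_r x x_unit; pose a := ip (A x) x.
have r_ge0 : 0 <= r by rewrite -lee_fin -area_r area_ge0.
have orth_u : ip (A x - a *: x) x = 0 by rewrite ipBl ipZl x_unit mulr1 subrr.
have orth_v : ip (Astar x - a^* *: x) x = 0.
  by rewrite ipBl ipZl x_unit mulr1 adjoint_ipl ipC subrr.
have sqnorm_split y c : ip (y - c *: x) x = 0 -> sqnorm y = sqnorm (y - c *: x) + normc2 c.
  move=> orth; rewrite -{1}(subrK (c *: x) y) sqnormD_orth ?ipZr ?orth ?mulr0 //.
  by rewrite sqnormZ /sqnorm x_unit mulr1.
rewrite (sqnorm_split _ _ orth_u) (sqnorm_split _ _ orth_v) normc2J opprD addrACA subrr addr0.
apply: sqnorm_sub_le_orth orth_u orth_v _ => [|e e_unit ex]; first by rewrite mulr_ge0.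
have xe : ip x e = 0 by rewrite ipC ex conjc0.
rewrite !ipBl !ipZl xe !mulr0 !subr0.
have -> : normc2 (ip (Astar x) e) = normc2 (ip (A e) x) by rewrite A_adjoint -normc2J -ipC.
by have := offdiag_le_area x_unit e_unit xe; rewrite area_r -EFinM lee_fin distrC.
Qed.

Definition self_commutator (x : V) : V := Astar (A x) - A (Astar x).

Lemma self_commutator_linear a x y :
  self_commutator (a *: x + y) = a *: self_commutator x + self_commutator y.
Proof. by rewrite /self_commutator !linearP /= scalerBr scalerN addrACA. Qed.

Lemma self_commutator_selfadjoint x y : ip (self_commutator x) y = ip x (self_commutator y).
Proof. by rewrite ipBl ipBr adjoint_ipl A_adjoint A_adjoint adjoint_ipl. Qed.

Lemma Re_ip_self_commutator z :
  complex.Re (ip (self_commutator z) z) = sqnorm (A z) - sqnorm (Astar z).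
Proof. by rewrite ipBl adjoint_ipl (A_adjoint (Astar z)) raddfB. Qed.

Lemma op_norm_self_commutator_le_area :
  (op_norm ip self_commutator <= 2%:E * area (numerical_range ip A))%E.
Proof.
have := area_ge0 (numerical_range ip A).
case area_r : (area _) => [r | | //] r_ge0; last by rewrite mulry gtr0_sg // mul1e leey.
rewrite lee_fin in r_ge0; apply: ge_ereal_sup => _ [x x_le1 <-]; rewrite -EFinM lee_fin.
apply: (selfadjoint_hnorm_le self_commutator_linear self_commutator_selfadjoint).
- by rewrite mulr_ge0.
- apply: (quadratic_le_sqnorm self_commutator_linear) => z z_unit.
  by rewrite Re_ip_self_commutator commutator_form_le_area.
- by rewrite -ler_sqrt // sqrtr1.
Qed.

End Operator.

End InnerProduct.

Theorem proposition4 (R : realType) (V : lmodType R[i]) (ip : V -> V -> R[i])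
    (A Astar : V -> V) :
  is_hilbert_space ip ->
  is_bounded_linear ip A ->
  is_adjoint ip A Astar ->
  (op_norm ip (fun x => (Astar (A x) - A (Astar x))%R)
     <= 2%:E * area (numerical_range ip A))%E.
Proof.
move=> [[ip_linear ipC ip_ge0 ip_eq0] _] [A_linear _] A_adjoint.
exact: op_norm_self_commutator_le_area.
Qed.
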